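(* Let $f(\mathbf{x})=f_0+\sum_{\alpha\in U^n_{2d}}f_\alpha\mathbf{x}^\alpha$ be a real polynomial of degree $2d$ in $\mathbf{x}\in\mathbb{R}^n$, where $U^n_{2d}=\{\alpha\in\mathbb{N}^n:0<|\alpha|\le2d\}$. Let $[\mathbf{x}]_d\in\mathbb{R}^{N}$, $N=\binom{n+d}{d}$, be the vector of all monomials of degree at most $d$ (in a fixed order, first entry $1$), and suppose $N=mp$ with integers $m\ge1$, $p\ne1$; set $[\mathcal{X}]_d=\mathrm{fold}([\mathbf{x}]_d)\in\mathbb{R}^{m\times1\times p}$. Define $\gamma_{sdp}=\sup\{\gamma\in\mathbb{R}:\exists\,X\in\mathbb{R}^{N\times N}\text{ symmetric PSD with } f(\mathbf{x})-\gamma=X\bullet([\mathbf{x}]_d[\mathbf{x}]_d^\top)\ \forall\mathbf{x}\in\mathbb{R}^n\}$ (the SDP relaxation) and $\gamma_{tsdp}=\sup\{\gamma\in\mathbb{R}:\exists\,\mathcal{X}\in S\mathbb{R}^{m\times m\times p}_+\text{ with } f(\mathbf{x})-\gamma=\langle\mathcal{X},[\mathcal{X}]_d*[\mathcal{X}]_d^\top\rangle\ \forall\mathbf{x}\in\mathbb{R}^n\}$ (the TSDP relaxation), and put $f^{uc}_{sdp}=f_0-\gamma_{sdp}$, $f^{uc}_{tsdp}=f_0-\gamma_{tsdp}$. Assume both suprema are finite and attained. Then $f^{uc}_{sdp}\le f^{uc}_{tsdp}$, and $f^{uc}_{sdp}=f^{uc}_{tsdp}$ if and only if there exists an optimal matrix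 $X^*$ of the SDP relaxation (a symmetric PSD $X^*$ with $f(\mathbf{x})-\gamma_{sdp}=X^*\bullet([\mathbf{x}]_d[\mathbf{x}]_d^\top)$ for all $\mathbf{x}$) which is $p$-block circulant, i.e. $X^*=\mathrm{bcirc}(\mathcal{Y})$ for some $\mathcal{Y}\in\mathbb{R}^{m\times m\times p}$.
   Context: For $\mathcal{A}\in\mathbb{R}^{m\times n\times p}$ let $A^{(k)}\in\mathbb{R}^{m\times n}$ ($k\in[p]$) be its frontal slices, $(A^{(k)})_{ij}=a_{ijk}$. $\mathrm{bcirc}(\mathcal{A})\in\mathbb{R}^{mp\times np}$ is the block circulant matrix whose $(i,j)$ block ($i,j\in[p]$) is $A^{(((i-j)\bmod p)+1)}$. $\mathrm{unfold}(\mathcal{A})\in\mathbb{R}^{mp\times n}$ stacks $A^{(1)},\dots,A^{(p)}$ vertically, $\mathrm{fold}$ is its inverse (so a vector in $\mathbb{R}^{mp}$ is folded into an $m\times1\times p$ tensor whose $k$-th frontal slice is the $k$-th block of length $m$), and the T-product is $\mathcal{A}*\mathcal{B}=\mathrm{fold}(\mathrm{bcirc}(\mathcal{A})\,\mathrm{unfold}(\mathcal{B}))$. The transpose $\mathcal{A}^\top$ has frontal slices $(A^{(1)})^\top,(A^{(p)})^\top,\dots,(A^{(2)})^\top$; $S\mathbb{R}^{n\times n\times p}$ is the set of $\mathcal{A}\in\mathbb{R}^{n\times n\times p}$ with $\mathcal{A}^\top=\mathcal{A}$. The inner product is $\langle\mathcal{A},\mathcal{B}\rangle=\sum a_{ijk}b_{ijk}$,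 and $X\bullet Y=\sum_{ij}X_{ij}Y_{ij}$ for matrices. $S\mathbb{R}^{m\times m\times p}_+$ is the set of symmetric T-positive semidefinite tensors: $\mathcal{A}\in S\mathbb{R}^{m\times m\times p}$ with $\langle\mathcal{Z},\mathcal{A}*\mathcal{Z}\rangle\ge0$ for all $\mathcal{Z}\in\mathbb{R}^{m\times1\times p}$. $\mathbf{x}^\alpha=x_1^{\alpha_1}\cdots x_n^{\alpha_n}$, $|\alpha|=\sum\alpha_i$. *)

From HB Require Import structures.
From mathcomp Require Import all_boot all_order all_algebra.
From mathcomp Require Export reals.
Set Implicit Arguments. Unset Strict Implicit. Unset Printing Implicit Defensive.
Import Order.TTheory GRing.Theory Num.Theory.
Local Open Scope ring_scope.

(* A row index r : 'I_(p*m) of a stacked matrix is r = k*m + a with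
   k = r %/ m the block (frontal slice, 0-based) and a = r %% m.        *)
Lemma idx_mod_lt (p m : nat) (r : 'I_(p * m)) : (r %% m < m)%N.
Proof.
case: m r => [|m] r; last by rewrite ltn_pmod.
by case: r => /= r; rewrite muln0.
Qed.

Lemma idx_div_lt (p m : nat) (r : 'I_(p * m)) : (r %/ m < p)%N.
Proof.
case: m r => [|m] r; first by case: r => /= r; rewrite muln0.
by rewrite ltn_divLR // (ltn_ord r).
Qed.

Definition blk (p m : nat) (r : 'I_(p * m)) : 'I_p := Ordinal (idx_div_lt r).
Definition off (p m : nat) (r : 'I_(p * m)) : 'I_m := Ordinal (idx_mod_lt r).

Lemma circ_lt (p : nat) (i j : 'I_p) : ((i + (p - j)) %% p < p)%N.
Proof. by rewrite ltn_pmod // (leq_ltn_trans (leq0n _) (ltn_ord i)). Qed.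

Definition circ_idx (p : nat) (i j : 'I_p) : 'I_p := Ordinal (circ_lt i j).

Lemma neg_lt (p : nat) (k : 'I_p) : ((p - k) %% p < p)%N.
Proof. by rewrite ltn_pmod // (leq_ltn_trans (leq0n _) (ltn_ord k)). Qed.

Definition neg_idx (p : nat) (k : 'I_p) : 'I_p := Ordinal (neg_lt k).

Section Tensors.
Variable R : realType.

(* A : tensor m n p  is  A in R^{m x n x p};  A k  is the frontal slice A^(k+1) *)
Definition tensor (m n p : nat) := 'I_p -> 'M[R]_(m, n).

(* bcirc: block (i,j) is A^(((i-j) mod p)+1) *)
Definition bcirc (m n p : nat) (A : tensor m n p) : 'M[R]_(p * m, p * n) :=
  \matrix_(r, c) A (circ_idx (blk r) (blk c)) (off r) (off c).

Definition tunfold (m n p : nat) (A : tensor m n p) : 'M[R]_(p * m, n) :=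
  \matrix_(r, j) A (blk r) (off r) j.

Definition tfold (m n p : nat) (M : 'M[R]_(p * m, n)) : tensor m n p :=
  fun k => \matrix_(a, j) M (mxvec_index k a) j.

Definition tprod (m n l p : nat) (A : tensor m n p) (B : tensor n l p)
  : tensor m l p := tfold (bcirc A *m tunfold B).

(* transpose: slices (A^(1))^T, (A^(p))^T, ..., (A^(2))^T *)
Definition ttr (m n p : nat) (A : tensor m n p) : tensor n m p :=
  fun k => (A (neg_idx k))^T.

Definition tsym (n p : nat) (A : tensor n n p) : Prop := ttr A = A.

Definition tinner (m n p : nat) (A B : tensor m n p) : R :=
  \sum_(k < p) \sum_(i < m) \sum_(j < n) A k i j * B k i j.

Definition tpsd (m p : nat) (A : tensor m m p) : Prop :=
  tsym A /\ forall Z : tensor m 1 p, 0 <= tinner Z (tprod A Z).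

Definition mxdot (k l : nat) (X Y : 'M[R]_(k, l)) : R :=
  \sum_(i < k) \sum_(j < l) X i j * Y i j.

Definition psd (k : nat) (X : 'M[R]_k) : Prop :=
  X^T = X /\ forall v : 'cV[R]_k, 0 <= (v^T *m X *m v) ord0 ord0.

Definition expo (n e : nat) := {ffun 'I_n -> 'I_e.+1}.

Definition absdeg (n e : nat) (a : expo n e) : nat := (\sum_(i < n) (a i : nat))%N.

Definition monom (n e : nat) (x : 'I_n -> R) (a : expo n e) : R :=
  \prod_(i < n) x i ^+ a i.

Definition polyval (n d : nat) (f0 : R) (fc : expo n (2 * d) -> R)
  (x : 'I_n -> R) : R :=
  f0 + \sum_(a : expo n (2 * d) | (0 < absdeg a <= 2 * d)%N) fc a * monom x a.

Definition monvec (n d N : nat) (mon : 'I_N -> expo n (2 * d))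
  (x : 'I_n -> R) : 'cV[R]_N := \col_i monom x (mon i).

Definition sdp_feasible (n d m p : nat) (f0 : R) (fc : expo n (2 * d) -> R)
  (mon : 'I_(p * m) -> expo n (2 * d)) (gamma : R) (X : 'M[R]_(p * m)) : Prop :=
  psd X /\ forall x : 'I_n -> R,
    polyval f0 fc x - gamma = mxdot X (monvec mon x *m (monvec mon x)^T).

Definition tsdp_feasible (n d m p : nat) (f0 : R) (fc : expo n (2 * d) -> R)
  (mon : 'I_(p * m) -> expo n (2 * d)) (gamma : R) (T : tensor m m p) : Prop :=
  tpsd T /\ forall x : 'I_n -> R,
    let Xd := tfold (monvec mon x : 'M[R]_(p * m, 1)) in
    polyval f0 fc x - gamma = tinner T (tprod Xd (ttr Xd)).

End Tensors.

From mathcomp Require Import all_boot all_order all_algebra.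
From mathcomp Require Import lra.
From Stdlib Require Import FunctionalExtensionality.
Set Implicit Arguments. Unset Strict Implicit. Unset Printing Implicit Defensive.
Import Order.TTheory GRing.Theory Num.Theory.
Local Open Scope ring_scope.

(* The whole theorem rests on one observation: the map
   T |-> bcirc T identifies the TSDP relaxation with the restriction of the
   SDP relaxation to p-block circulant matrices.  Precisely, for every tensor
   T and every vector v = [x]_d,
     (1) <T, fold v * (fold v)^T> = bcirc T . (v v^T), and
     (2) T is symmetric T-positive semidefinite  iff  bcirc T is symmetric PSD,
   the latter because <Z, T * Z> is the quadratic form of bcirc T at unfold Z.
   Hence T is TSDP-feasible for gamma iff bcirc T is SDP-feasible for gamma.
   Consequently every TSDP value is an SDP value, so gamma_tsdp <= gamma_sdp,
   i.e. f_sdp <= f_tsdp; and gamma_tsdp = gamma_sdp iff some SDP-optimal matrix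
   is block circulant (its generating tensor is then TSDP-feasible at gamma_sdp).  When p = 0 the hypothesis binom(n+d,d) = m p is absurd,
   so we may write p = p'.+1 and use the cyclic group structure of 'I_p. *)

Lemma index_allpairs (T1 T2 : eqType) (s1 : seq T1) (s2 : seq T2) i j :
  i \in s1 -> j \in s2 ->
  index (i, j) [seq (x1, x2) | x1 <- s1, x2 <- s2] =
    (index i s1 * size s2 + index j s2)%N.
Proof.
move=> + js2; elim: s1 => //= x s IH; rewrite inE => /orP hi.
rewrite index_cat; case: (eqVneq x i) => [->|nxi].
  have -> : (i, j) \in [seq (i, x2) | x2 <- s2] by apply/mapP; exists j.
  by rewrite index_map // => a b [].
have -> : (i, j) \in [seq (x, x2) | x2 <- s2] = false.
  by apply/negbTE/mapP => -[y _ [e _]]; move: nxi; rewrite e eqxx.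
rewrite size_map IH; last by case: hi => // /eqP e; rewrite e eqxx in nxi.
by rewrite mulSn addnA.
Qed.

Lemma mxvec_index_val m n (i : 'I_m) (j : 'I_n) :
  nat_of_ord (mxvec_index i j) = (i * n + j)%N.
Proof.
rewrite /mxvec_index /= /enum_rank enum_rank_in.unlock insubdK.
  rewrite enumT unlock /= /prod_enum index_allpairs ?mem_enum //.
  by rewrite !index_enum_ord size_enum_ord.
by rewrite unfold_in cardE index_mem mem_enum.
Qed.

Section StackedIndices.
Variables (R : realType) (p m : nat).

Lemma blk_mxvec_index (k : 'I_p) (a : 'I_m) : blk (mxvec_index k a) = k.
Proof.
apply: val_inj; change ((mxvec_index k a : nat) %/ m = k)%N; rewrite mxvec_index_val.
have m_gt0 : (0 < m)%N by case: a => a /= /(leq_ltn_trans (leq0n a)).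
by rewrite divnMDl // divn_small // addn0.
Qed.

Lemma off_mxvec_index (k : 'I_p) (a : 'I_m) : off (mxvec_index k a) = a.
Proof.
apply: val_inj; change ((mxvec_index k a : nat) %% m = a)%N.
by rewrite mxvec_index_val modnMDl modn_small.
Qed.

Lemma mxvec_index_blk_off (r : 'I_(p * m)) : mxvec_index (blk r) (off r) = r.
Proof.
by case/mxvec_indexP: r => k a; rewrite blk_mxvec_index off_mxvec_index.
Qed.

Lemma sum_stacked (F : 'I_(p * m) -> R) :
  \sum_r F r = \sum_(k < p) \sum_(a < m) F (mxvec_index k a).
Proof.
rewrite (reindex _ (curry_mxvec_bij _ _)) /= pair_bigA.
by apply: eq_bigr => -[k a].
Qed.

End StackedIndices.

Section CirculantCorrespondence.
Variables (R : realType) (p' m : nat).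
Local Notation p := p'.+1.

Lemma circ_idxE (i j : 'I_p) : circ_idx i j = i - j.
Proof. by apply: val_inj => /=; rewrite modnDmr. Qed.

Lemma neg_idxE (k : 'I_p) : neg_idx k = - k.
Proof. by apply: val_inj. Qed.

Lemma tprod_fold_ttrE (v : 'cV[R]_(p * m)) k a b :
  tprod (tfold v) (ttr (tfold v)) k a b =
  \sum_(l < p) v (mxvec_index (k - l) a) ord0 * v (mxvec_index (- l) b) ord0.
Proof.
rewrite /tprod /tfold mxE mxE sum_stacked; apply: eq_bigr => l _.
by rewrite big_ord1 !mxE !blk_mxvec_index !off_mxvec_index circ_idxE neg_idxE.
Qed.

(* Both sides of identity (1) expand to the same quadruple sum; this names it. *)
Definition circ_form (T : tensor R m m p) (v : 'cV[R]_(p * m)) : R :=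
  \sum_(j < p) \sum_(i < p) \sum_(a < m) \sum_(b < m)
    T (i - j) a b * (v (mxvec_index i a) ord0 * v (mxvec_index j b) ord0).

(* Left side of (1): reindex the slice k and the convolution variable l as
   i = k - l and j = -l. *)
Lemma tinner_tprod_fold (T : tensor R m m p) (v : 'cV[R]_(p * m)) :
  tinner T (tprod (tfold v) (ttr (tfold v))) = circ_form T v.
Proof.
rewrite /tinner.
under eq_bigr => k _ do under eq_bigr => a _ do under eq_bigr => b _ do
  rewrite tprod_fold_ttrE mulr_sumr.
under eq_bigr => k _ do under eq_bigr => a _ do rewrite exchange_big /=.
under eq_bigr => k _ do rewrite exchange_big /=.
rewrite exchange_big /= (reindex_inj oppr_inj) /=; apply: eq_bigr => j _.
rewrite (reindex_inj (addIr (- j))) /=; apply: eq_bigr => i _.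
apply: eq_bigr => a _; apply: eq_bigr => b _.
by rewrite opprK subrK.
Qed.

(* Right side of (1): split row and column indices of bcirc T into blocks. *)
Lemma mxdot_bcirc (T : tensor R m m p) (v : 'cV[R]_(p * m)) :
  mxdot (bcirc T) (v *m v^T) = circ_form T v.
Proof.
rewrite /mxdot /circ_form; symmetry.
rewrite exchange_big /= sum_stacked; apply: eq_bigr => i _.
rewrite exchange_big /=; apply: eq_bigr => a _.
rewrite sum_stacked; apply: eq_bigr => j _; apply: eq_bigr => b _.
by rewrite !mxE big_ord1 !mxE !blk_mxvec_index !off_mxvec_index circ_idxE.
Qed.

Lemma tinner_bcirc (T : tensor R m m p) (v : 'cV[R]_(p * m)) :
  tinner T (tprod (tfold v) (ttr (tfold v))) = mxdot (bcirc T) (v *m v^T).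
Proof. by rewrite tinner_tprod_fold mxdot_bcirc. Qed.

Lemma tinner_tprod_quad (T : tensor R m m p) (Z : tensor R m 1 p) :
  tinner Z (tprod T Z) = ((tunfold Z)^T *m bcirc T *m tunfold Z) ord0 ord0.
Proof.
rewrite -mulmxA mxE [RHS]sum_stacked /tinner.
apply: eq_bigr => k _; apply: eq_bigr => a _.
by rewrite big_ord1 /tprod /tfold !mxE blk_mxvec_index off_mxvec_index.
Qed.

Lemma tunfold_tfold (v : 'cV[R]_(p * m)) : tunfold (tfold v) = v.
Proof. by apply/matrixP => r j; rewrite !mxE mxvec_index_blk_off. Qed.

(* Identity (2), first direction: symmetry of T gives symmetry of bcirc T
   and T-positivity is positivity of bcirc T on vectors of the form unfold Z. *)
Lemma tpsd_bcirc (T : tensor R m m p) : tpsd T -> psd (bcirc T).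
Proof.
case=> T_sym T_pos; split.
  apply/matrixP => r c; rewrite !mxE !circ_idxE.
  have := congr1 (fun F : tensor R m m p => F (blk c - blk r) (off c) (off r)) T_sym.
  by rewrite /ttr mxE neg_idxE opprB => ->.
by move=> v; have := T_pos (tfold v); rewrite tinner_tprod_quad tunfold_tfold.
Qed.

(* Identity (2), second direction: the slices of T are read off from the
   first block column of bcirc T, whose symmetry is that of T. *)
Lemma bcirc_tpsd (T : tensor R m m p) : psd (bcirc T) -> tpsd T.
Proof.
case=> X_sym X_pos; split; last by move=> Z; rewrite tinner_tprod_quad.
apply: functional_extensionality => k; apply/matrixP => a b.
rewrite /ttr mxE neg_idxE.
have := congr1 (fun M : 'M[R]_(p * m) => M (mxvec_index k a) (mxvec_index 0 b)) X_sym.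
by rewrite !mxE !blk_mxvec_index !off_mxvec_index !circ_idxE subr0 sub0r.
Qed.

Lemma tsdp_feasible_bcirc n d (f0 : R) (fc : expo n (2 * d) -> R)
    (mon : 'I_(p * m) -> expo n (2 * d)) (g : R) (T : tensor R m m p) :
  tsdp_feasible f0 fc mon g T <-> sdp_feasible f0 fc mon g (bcirc T).
Proof.
split=> -[T_psd f_eq]; split=> [|x].
- exact: tpsd_bcirc.
- by rewrite (f_eq x) /= tinner_bcirc.
- exact: bcirc_tpsd.
- by rewrite /= tinner_bcirc; apply: f_eq.
Qed.

End CirculantCorrespondence.

Theorem mainTheorem17 (R : realType) (n d m p : nat)
  (f0 : R) (fc : expo n (2 * d) -> R)
  (* f has degree exactly 2d *)
  (hdeg : exists a : expo n (2 * d), absdeg a = (2 * d)%N /\ fc a != 0)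
  (* N = binom(n+d, d) = m p,  m >= 1,  p <> 1 *)
  (hN : 'C(n + d, d) = (m * p)%N) (hm : (0 < m)%N) (hp : p != 1%N)
  (* [x]_d : a fixed ordering of all monomials of degree <= d, first entry 1 *)
  (mon : 'I_(p * m) -> expo n (2 * d))
  (hmon_inj : injective mon)
  (hmon_onto : forall a : expo n (2 * d),
      (absdeg a <= d)%N <-> exists i, mon i = a)
  (hmon_first : forall i : 'I_(p * m), val i = 0%N -> absdeg (mon i) = 0%N)
  (gsdp gtsdp : R)
  (* gamma_sdp is a finite, attained supremum (a maximum) *)
  (hsdp_att : exists X, sdp_feasible f0 fc mon gsdp X)
  (hsdp_ub : forall g, (exists X, sdp_feasible f0 fc mon g X) -> g <= gsdp)
  (* gamma_tsdp is a finite, attained supremum (a maximum) *)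
  (htsdp_att : exists T, tsdp_feasible f0 fc mon gtsdp T)
  (htsdp_ub : forall g, (exists T, tsdp_feasible f0 fc mon g T) -> g <= gtsdp) :
  f0 - gsdp <= f0 - gtsdp /\
  (f0 - gsdp = f0 - gtsdp <->
     exists X : 'M[R]_(p * m), sdp_feasible f0 fc mon gsdp X /\
       exists Y : tensor R m m p, X = bcirc Y).
Proof.
(* p = 0 would make binom(n+d, d) vanish. *)
destruct p as [|p'].
  by have := bin_gt0 (n + d) d; rewrite leq_addl hN muln0.
have [T T_opt] := htsdp_att.
(* An optimal TSDP tensor gives an SDP-feasible matrix: gamma_tsdp <= gamma_sdp. *)
have T_sdp := proj1 (tsdp_feasible_bcirc _ _ _ _ _) T_opt.
have g_le : gtsdp <= gsdp := hsdp_ub _ (ex_intro _ _ T_sdp).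
split; first lra.
split=> [f_eq | [X [X_opt [Y X_eq]]]].
- (* Equality: bcirc T itself is an optimal block circulant SDP matrix. *)
  have -> : gsdp = gtsdp by lra.
  by exists (bcirc T); split; last exists T.
- (* A block circulant optimum bcirc Y yields a TSDP-feasible Y at gamma_sdp. *)
  rewrite {X}X_eq in X_opt.
  have := htsdp_ub _ (ex_intro _ _ (proj2 (tsdp_feasible_bcirc _ _ _ _ _) X_opt)).
  lra.
Qed.
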